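(* Let $\tau$ be a smooth function on $S^1$ and let $\ell>0$. Let $\tau^\circ=\int_{S^1}\tau\,ds$, where $s$ is the unit coordinate on $S^1$. If $\tau^\circ\neq0$, let $\Psi=\ell\tau^\circ$. Then there is a smooth embedding $\iota:S^1\to\mathcal K_\Psi$ such that $\iota(S^1)$ is a spacelike curve whose induced metric $g$ and second fundamental form $K$ satisfy $\iota^*g=g_\ell$ and $\iota^*K=\tau\,g_\ell$. If $\tau^\circ=0$, then there exist $L>0$ and a smooth embedding $\iota:S^1\to\mathcal C_L$ such that $\iota(S^1)$ is a spacelike curve whose induced metric $g$ and second fundamental form $K$ satisfy $\iota^*g=g_\ell$ and $\iota^*K=\tau\,g_\ell$.
   Context: $S^1=\mathbb{R}/\mathbb{Z}$ with unit coordinate $s$ (so $\int_{S^1}ds=1$), and $g_\ell=\ell^2ds^2$. $\mathbb{R}^{1,1}$ is $\mathbb{R}^2$ with coordinates $(t,x)$, metric $-dt^2+dx^2$, time-oriented by $\partial_t$; $I_\pm=\{\pm t>|x|\}$. For $\Psi\neq0$, $B_\Psi$ is the linear boost with matrix $\begin{pmatrix}\cosh\Psi&\sinh\Psi\\ \sinh\Psi&\cosh\Psi\end{pmatrix}$; the Kasner surface $\mathcal K_\Psi$ is $I_+/\langle B_\Psi\rangle$ if $\Psi>0$ and $I_-/\langle B_\Psi\rangle$ if $\Psi<0$, with the inherited time-oriented Lorentzian metric. For $L>0$, the flat Lorentzian cylinder is $\mathcal C_L=\mathbb{R}^{1,1}/\langle(t,x)\mapsto(t,x+L)\rangle$. For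 a spacelike curve, the induced second fundamental form is $K(X,Y)=-\langle n,\nabla_XY\rangle$ with $n$ the future-pointing unit normal. *)

From Stdlib Require Import Reals ZArith.
From Coquelicot Require Import Coquelicot.
Open Scope R_scope.

Definition smooth (f : R -> R) : Prop := forall (n : nat) (x : R), ex_derive_n f n x.

(* A function on S^1 = R/Z, seen as a 1-periodic function of the unit coordinate s. *)
Definition periodic1 (f : R -> R) : Prop := forall s, f (s + 1) = f s.

Definition mink (u v : R * R) : R := - (fst u * fst v) + snd u * snd v.

Definition boost (Psi : R) (p : R * R) : R * R :=
  (cosh Psi * fst p + sinh Psi * snd p, sinh Psi * fst p + cosh Psi * snd p).

Definition xshift (L : R) (p : R * R) : R * R := (fst p, snd p + L).

(* I_+ = {t > |x|}, I_- = {-t > |x|}; K_Psi uses I_+ if Psi>0 and I_- if Psi<0. *)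
Definition kasner_domain (Psi : R) (p : R * R) : Prop :=
  if Rlt_dec 0 Psi then fst p > Rabs (snd p) else - fst p > Rabs (snd p).

Definition pt (ct cx : R -> R) (s : R) : R * R := (ct s, cx s).
Definition vel (ct cx : R -> R) (s : R) : R * R := (Derive ct s, Derive cx s).
Definition acc (ct cx : R -> R) (s : R) : R * R :=
  (Derive_n ct 2 s, Derive_n cx 2 s).

(* Future-pointing (t-component > 0) unit normal to a spacelike vector T. *)
Definition future_unit_normal (T : R * R) : R * R :=
  let q := sqrt (mink T T) in
  if Rlt_dec 0 (snd T) then (snd T / q, fst T / q)
  else (- snd T / q, - fst T / q).

(* A smooth map iota : S^1 -> K_Psi, described by a smooth lift
   s |-> (ct s, cx s) : R -> I_(+/-) of iota composed with R -> S^1 = R/Z;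
   the lift satisfies gamma(s+1) = B_Psi^k gamma(s) = B_(k Psi) gamma(s) for some
   integer k.  Embedding: injective on S^1 into the quotient (points of R^2
   are identified modulo the group <B_Psi> = {B_(m Psi)}), and an immersion
   (S^1 compact, quotient Hausdorff, so an injective immersion is an embedding). *)
Definition kasner_embedding (Psi : R) (ct cx : R -> R) : Prop :=
  smooth ct /\ smooth cx /\
  (exists k : Z, forall s, pt ct cx (s + 1) = boost (IZR k * Psi) (pt ct cx s)) /\
  (forall s, kasner_domain Psi (pt ct cx s)) /\
  (forall s s' (m : Z), pt ct cx s' = boost (IZR m * Psi) (pt ct cx s) ->
      exists j : Z, s' - s = IZR j) /\
  (forall s, vel ct cx s <> (0, 0)).

(* Same for a smooth embedding S^1 -> C_L = R^{1,1}/<(t,x) |-> (t,x+L)>. *)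
Definition cylinder_embedding (L : R) (ct cx : R -> R) : Prop :=
  smooth ct /\ smooth cx /\
  (exists k : Z, forall s, pt ct cx (s + 1) = xshift (IZR k * L) (pt ct cx s)) /\
  (forall s s' (m : Z), pt ct cx s' = xshift (IZR m * L) (pt ct cx s) ->
      exists j : Z, s' - s = IZR j) /\
  (forall s, vel ct cx s <> (0, 0)).

(* The image is a spacelike curve with iota^* g = g_l = l^2 ds^2 and
   iota^* K = tau g_l, where K(X,Y) = -<n, nabla_X Y> with n the future unit
   normal.  The flat metric descends from R^{1,1} (the deck groups act by
   isometries), so in the lift nabla_{gamma'} gamma' = gamma''. Both sides are
   symmetric 2-tensors on the 1-dimensional S^1, so they are compared on
   (d/ds, d/ds). *)
Definition realizes (tau : R -> R) (l : R) (ct cx : R -> R) : Prop :=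
  (forall s, mink (vel ct cx s) (vel ct cx s) > 0) /\
  (forall s, mink (vel ct cx s) (vel ct cx s) = l ^ 2) /\
  (forall s, - mink (future_unit_normal (vel ct cx s)) (acc ct cx s) = tau s * l ^ 2).

From Stdlib Require Import Reals ZArith Lra.
From Coquelicot Require Import Coquelicot.
Open Scope R_scope.

(* In null coordinates u = t + x, v = t - x the boost B_Psi acts by
   (u, v) |-> (e^Psi u, e^-Psi v).  Put theta(s) = l * int_0^s tau.  A curve with
   u' = l alpha e^theta and v' = -(l / alpha) e^-theta has Minkowski speed l and
   hyperbolic tangent angle theta, so K(gamma', gamma') = l theta' = tau l^2.
   Periodicity of tau gives theta(s + 1) = theta(s) + Psi with Psi = l int_0^1 tau, so
   gamma(s + 1) = B_Psi gamma(s) + const.  If Psi <> 0 the integration constants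
   kill the translation; u and v are strictly monotone, which places the curve in
   I_(+/-) and makes it injective modulo <B_Psi>.  If Psi = 0, alpha is chosen so
   that the translation is purely spatial, of length L > 0. *)

(* [smooth] only mentions [Derive_n]; carrying the derivatives along in [Cn] makes
   closure under products and composition a plain induction. *)
Fixpoint Cn (n : nat) (f : R -> R) : Prop :=
  match n with
  | O => True
  | S n => (forall x, ex_derive f x) /\ Cn n (Derive f)
  end.

Definition Cinf (f : R -> R) : Prop := forall n, Cn n f.

Lemma Cn_ext n : forall f g, (forall x, f x = g x) -> Cn n f -> Cn n g.
Proof.
  induction n as [|n IH]; simpl; auto.
  intros f g Hfg [Hf Hdf]; split.
  - intro x; apply (ex_derive_ext f); auto.
  - apply (IH (Derive f)); auto. intro x; apply Derive_ext; auto.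
Qed.

Lemma Cn_S n : forall f, Cn (S n) f -> Cn n f.
Proof.
  induction n as [|n IH]; simpl; auto.
  intros f [Hf [Hdf Hddf]]; split; auto.
  apply IH; simpl; auto.
Qed.

Lemma Cn_S_is_derive n f g : (forall x, is_derive f x (g x)) -> Cn n g -> Cn (S n) f.
Proof.
  intros Hfg Hg; simpl; split.
  - intro x; eexists; apply Hfg.
  - apply (Cn_ext n g); auto. intro x; symmetry; apply is_derive_unique, Hfg.
Qed.

Lemma Cn_const n : forall c, Cn n (fun _ => c).
Proof.
  induction n; intro c; simpl; auto.
  apply (Cn_S_is_derive n _ (fun _ => 0)); auto. intro x; apply (is_derive_const c x).
Qed.

Lemma Cn_plus n : forall f g, Cn n f -> Cn n g -> Cn n (fun x => f x + g x).
Proof.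
  induction n as [|n IH]; simpl; auto.
  intros f g [Hf Hdf] [Hg Hdg].
  apply (Cn_S_is_derive n _ (fun x => Derive f x + Derive g x)); auto.
  intro x; apply (is_derive_plus f g); apply Derive_correct; auto.
Qed.

Lemma Cn_mult n : forall f g, Cn n f -> Cn n g -> Cn n (fun x => f x * g x).
Proof.
  induction n as [|n IH]; simpl; auto.
  intros f g Hf Hg.
  apply (Cn_S_is_derive n _ (fun x => Derive f x * g x + f x * Derive g x)).
  - intro x. apply (is_derive_mult f g); [apply Derive_correct, Hf
      | apply Derive_correct, Hg | intros; apply Rmult_comm].
  - apply Cn_plus; apply IH; try apply Hf; try apply Hg; apply Cn_S; simpl; auto.
Qed.

Lemma Cn_comp n : forall f g, Cn n f -> Cn n g -> Cn n (fun x => g (f x)).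
Proof.
  induction n as [|n IH]; simpl; auto.
  intros f g Hf Hg.
  apply (Cn_S_is_derive n _ (fun x => Derive f x * Derive g (f x))).
  - intro x. apply (is_derive_comp g f); apply Derive_correct; [apply Hg | apply Hf].
  - apply Cn_mult; [apply Hf |]. apply IH; [apply Cn_S; simpl; auto | apply Hg].
Qed.

Lemma Cn_exp n : Cn n exp.
Proof.
  induction n; simpl; auto.
  apply (Cn_S_is_derive n _ exp); auto. intro; apply is_derive_exp.
Qed.

Lemma ex_derive_n_Derive f n x :
  ex_derive_n (Derive f) (S n) x <-> ex_derive_n f (S (S n)) x.
Proof.
  simpl. assert (E : forall y, Derive_n (Derive f) n y = Derive_n f (S n) y).
  { intro y. rewrite <- Nat.add_1_r. apply (Derive_n_comp f n 1). }
  split; apply ex_derive_ext; [| symmetry]; apply E.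
Qed.

Lemma smooth_Cinf f : smooth f <-> Cinf f.
Proof.
  split.
  - intros Hf n; revert f Hf. induction n as [|n IH]; intros f Hf; [exact I |].
    split; [intro x; exact (Hf 1%nat x) |].
    apply IH; intros [|k] x; [exact I | apply (proj2 (ex_derive_n_Derive f k x)), Hf].
  - intros Hf n; revert f Hf. induction n as [|[|n] IH]; intros f Hf x.
    + exact I.
    + exact (proj1 (Hf 1%nat) x).
    + apply (proj1 (ex_derive_n_Derive f n x)), IH. intro k; apply (Hf (S k)).
Qed.

Lemma Cinf_ext f g : (forall x, f x = g x) -> Cinf f -> Cinf g.
Proof. intros Hfg Hf n; apply (Cn_ext n f); auto. Qed.

Lemma Cinf_const c : Cinf (fun _ => c).
Proof. intro n; apply Cn_const. Qed.

Lemma Cinf_plus f g : Cinf f -> Cinf g -> Cinf (fun x => f x + g x).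
Proof. intros Hf Hg n; apply Cn_plus; auto. Qed.

Lemma Cinf_mult f g : Cinf f -> Cinf g -> Cinf (fun x => f x * g x).
Proof. intros Hf Hg n; apply Cn_mult; auto. Qed.

Lemma Cinf_comp f g : Cinf f -> Cinf g -> Cinf (fun x => g (f x)).
Proof. intros Hf Hg n; apply Cn_comp; auto. Qed.

Lemma Cinf_exp : Cinf exp.
Proof. intro n; apply Cn_exp. Qed.

Lemma Cinf_continuous f : Cinf f -> forall x, continuous f x.
Proof. intros Hf x; exact (ex_derive_continuous f x (proj1 (Hf 1%nat) x)). Qed.

Lemma ex_RInt_of_continuous (f : R -> R) a b :
  (forall x, continuous f x) -> ex_RInt f a b.
Proof. intro Hf; apply (ex_RInt_continuous (V := R_CompleteNormedModule)); auto. Qed.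

Lemma is_derive_RInt_0 (f : R -> R) s :
  (forall x, continuous f x) -> is_derive (fun s => RInt f 0 s) s (f s).
Proof.
  intro Hf. apply (is_derive_RInt f _ 0); auto.
  apply filter_forall; intro y.
  apply (RInt_correct (V := R_CompleteNormedModule)), ex_RInt_of_continuous, Hf.
Qed.

Lemma is_derive_affine (f : R -> R) (c k s d : R) :
  is_derive f s d -> is_derive (fun x => c + k * f x) s (k * d).
Proof.
  intro Hf. assert (Df : Derive (fun x => f x) s = d) by (apply is_derive_unique, Hf).
  auto_derive; [exists d; exact Hf | rewrite Df; ring].
Qed.

Lemma Cinf_RInt f : Cinf f -> Cinf (fun s => RInt f 0 s).
Proof.
  intros Hf n. apply Cn_S, (Cn_S_is_derive n _ f), Hf.
  intro; apply is_derive_RInt_0, Cinf_continuous, Hf.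
Qed.

Lemma RInt_0_increasing (f : R -> R) : (forall x, continuous f x) -> (forall x, 0 < f x) ->
  forall a b, a < b -> RInt f 0 a < RInt f 0 b.
Proof.
  intros Hc Hp a b Hab.
  rewrite <- (RInt_Chasles (V := R_CompleteNormedModule) f 0 a b)
    by apply ex_RInt_of_continuous, Hc.
  assert (0 < RInt f a b) by (apply RInt_gt_0; auto).
  simpl; unfold plus; simpl; lra.
Qed.

Lemma RInt_0_shift1 (f : R -> R) c : (forall x, continuous f x) ->
  (forall y, f (y + 1) = c * f y) ->
  forall s, RInt f 0 (s + 1) = RInt f 0 1 + c * RInt f 0 s.
Proof.
  intros Hc Hf s.
  assert (Hsub := RInt_comp_lin (V := R_CompleteNormedModule) f 1 1 0 s
                    (ex_RInt_of_continuous f _ _ Hc)).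
  replace (1 * 0 + 1) with 1 in Hsub by ring.
  replace (1 * s + 1) with (s + 1) in Hsub by ring.
  rewrite <- (RInt_Chasles (V := R_CompleteNormedModule) f 0 1 (s + 1))
    by apply ex_RInt_of_continuous, Hc.
  rewrite <- Hsub, <- (RInt_scal (V := R_CompleteNormedModule))
    by apply ex_RInt_of_continuous, Hc.
  unfold plus; simpl; f_equal.
  apply RInt_ext; intros x _. unfold scal; simpl; unfold mult; simpl.
  rewrite Rmult_1_l, Rmult_1_l, Hf; reflexivity.
Qed.

Lemma shift_IZR_add (g : R -> R) L : (forall s, g (s + 1) = g s + L) ->
  forall (m : Z) s, g (s + IZR m) = g s + IZR m * L.
Proof.
  intros Hg m. induction m using Z.peano_ind; intro s.
  - rewrite Rplus_0_r; ring.
  - rewrite succ_IZR, <- Rplus_assoc, Hg, IHm; ring.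
  - rewrite <- Z.sub_1_r, minus_IZR.
    replace (s + (IZR m - 1)) with ((s - 1) + IZR m) by ring.
    rewrite IHm. replace (g s) with (g ((s - 1) + 1)) by (f_equal; ring).
    rewrite Hg; ring.
Qed.

Lemma shift_IZR_mul_exp (g : R -> R) Psi : (forall s, g (s + 1) = exp Psi * g s) ->
  forall (m : Z) s, g (s + IZR m) = exp (IZR m * Psi) * g s.
Proof.
  intros Hg m. induction m using Z.peano_ind; intro s.
  - rewrite Rplus_0_r, Rmult_0_l, exp_0; ring.
  - rewrite succ_IZR, <- Rplus_assoc, Hg, IHm, <- Rmult_assoc, <- exp_plus.
    f_equal; f_equal; ring.
  - rewrite <- Z.sub_1_r, minus_IZR.
    replace (s + (IZR m - 1)) with ((s - 1) + IZR m) by ring.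
    rewrite IHm. replace (g s) with (g ((s - 1) + 1)) by (f_equal; ring).
    rewrite Hg, <- Rmult_assoc, <- exp_plus. f_equal; f_equal; lra.
Qed.

Lemma strict_increasing_inj (g : R -> R) :
  (forall a b, a < b -> g a < g b) -> forall a b, g a = g b -> a = b.
Proof.
  intros Hg a b E. destruct (Rtotal_order a b) as [h | [h | h]]; auto;
    apply Hg in h; lra.
Qed.

Definition null_t (u v : R -> R) (s : R) : R := (u s + v s) / 2.
Definition null_x (u v : R -> R) (s : R) : R := (u s - v s) / 2.

Lemma boost_null Psi u v :
  boost Psi ((u + v) / 2, (u - v) / 2) =
  ((exp Psi * u + exp (- Psi) * v) / 2, (exp Psi * u - exp (- Psi) * v) / 2).
Proof.
  unfold boost, cosh, sinh; simpl.
  f_equal; field.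
Qed.

Lemma kasner_domain_null Psi u v : 0 < u * Psi -> 0 < v * Psi ->
  kasner_domain Psi ((u + v) / 2, (u - v) / 2).
Proof.
  intros Hu Hv. unfold kasner_domain; simpl.
  destruct (Rlt_dec 0 Psi) as [HPsi | HPsi].
  - assert (0 < u) by nra. assert (0 < v) by nra.
    unfold Rabs; destruct Rcase_abs; lra.
  - assert (u < 0) by nra. assert (v < 0) by nra.
    unfold Rabs; destruct Rcase_abs; lra.
Qed.

Lemma increasing_exp_shift_sign (g : R -> R) Psi :
  (forall a b, a < b -> g a < g b) -> (forall s, g (s + 1) = exp Psi * g s) ->
  forall s, 0 < g s * Psi.
Proof.
  intros Hg Hshift s.
  assert (Hlt := Hg s (s + 1) ltac:(lra)). rewrite Hshift in Hlt.
  destruct (Rtotal_order Psi 0) as [HPsi | [HPsi | HPsi]].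
  - assert (exp Psi < 1) by (rewrite <- exp_0; apply exp_increasing; lra). nra.
  - rewrite HPsi, exp_0 in Hlt; lra.
  - assert (1 < exp Psi) by (rewrite <- exp_0; apply exp_increasing; lra). nra.
Qed.

Lemma spacelike_vel_neq0 ct cx s :
  mink (vel ct cx s) (vel ct cx s) > 0 -> vel ct cx s <> (0, 0).
Proof. intros Hs E; rewrite E in Hs; unfold mink in Hs; simpl in Hs; lra. Qed.

Lemma kasner_embedding_null Psi u v :
  smooth (null_t u v) -> smooth (null_x u v) ->
  (forall a b, a < b -> u a < u b) -> (forall a b, a < b -> v b < v a) ->
  (forall s, u (s + 1) = exp Psi * u s) -> (forall s, v (s + 1) = exp (- Psi) * v s) ->
  (forall s, vel (null_t u v) (null_x u v) s <> (0, 0)) ->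
  kasner_embedding Psi (null_t u v) (null_x u v).
Proof.
  intros Ht Hx Hu Hv Hushift Hvshift Hvel.
  unfold kasner_embedding, pt, null_t, null_x.
  split; [exact Ht |]; split; [exact Hx |]; split; [| split; [| split]].
  - exists 1%Z; intro s. rewrite Rmult_1_l, boost_null, Hushift, Hvshift; reflexivity.
  - intro s. apply kasner_domain_null; [apply (increasing_exp_shift_sign u); auto |].
    replace (v s * Psi) with (- v s * - Psi) by ring.
    apply (increasing_exp_shift_sign (fun s => - v s));
      [intros a b h; apply Ropp_lt_contravar; auto |].
    intro y; rewrite Hvshift; ring.
  - intros s s' m E. rewrite boost_null in E. injection E as Et Ex.
    assert (Hus' : u s' = u (s + IZR m)).
    { rewrite (shift_IZR_mul_exp u Psi Hushift). lra. }
    apply (strict_increasing_inj u Hu) in Hus'. exists m; lra.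
  - exact Hvel.
Qed.

Lemma cylinder_embedding_intro L ct cx :
  smooth ct -> smooth cx ->
  (forall s, ct (s + 1) = ct s) -> (forall s, cx (s + 1) = cx s + L) ->
  (forall a b, a < b -> cx a < cx b) -> (forall s, vel ct cx s <> (0, 0)) ->
  cylinder_embedding L ct cx.
Proof.
  intros Ht Hx Htshift Hxshift Hxinc Hvel.
  unfold cylinder_embedding, pt, xshift; simpl.
  split; [exact Ht |]; split; [exact Hx |]; split; [| split].
  - exists 1%Z; intro s. rewrite Htshift, Hxshift, Rmult_1_l; reflexivity.
  - intros s s' m E. injection E as _ Ex.
    rewrite <- (shift_IZR_add cx L Hxshift) in Ex.
    apply (strict_increasing_inj cx Hxinc) in Ex. exists m; lra.
  - exact Hvel.
Qed.

Lemma is_derive_null (u v : R -> R) s (du dv : R) : is_derive u s du -> is_derive v s dv ->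
  is_derive (null_t u v) s ((du + dv) / 2) /\ is_derive (null_x u v) s ((du - dv) / 2).
Proof.
  intros Hu Hv. unfold null_t, null_x.
  assert (Du : Derive (fun x => u x) s = du) by (apply is_derive_unique, Hu).
  assert (Dv : Derive (fun x => v x) s = dv) by (apply is_derive_unique, Hv).
  split; auto_derive; try (rewrite Du, Dv; field);
    (split; [exists du; exact Hu | split; [exists dv; exact Hv | exact I]]).
Qed.

Lemma null_curve_derivatives (tau : R -> R) (l : R) (u v P Q : R -> R) :
  (forall s, is_derive P s (l * tau s * P s)) ->
  (forall s, is_derive Q s (- (l * tau s * Q s))) ->
  (forall s, is_derive u s (l * P s)) -> (forall s, is_derive v s (- (l * Q s))) ->
  forall s,
    vel (null_t u v) (null_x u v) s = (l * (P s - Q s) / 2, l * (P s + Q s) / 2) /\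
    acc (null_t u v) (null_x u v) s =
      (l ^ 2 * tau s * (P s + Q s) / 2, l ^ 2 * tau s * (P s - Q s) / 2).
Proof.
  intros dP dQ du dv.
  assert (Dt : forall s, Derive (null_t u v) s = l * (P s - Q s) / 2).
  { intro s. apply is_derive_unique.
    replace (l * (P s - Q s) / 2) with ((l * P s + - (l * Q s)) / 2) by field.
    exact (proj1 (is_derive_null u v s _ _ (du s) (dv s))). }
  assert (Dx : forall s, Derive (null_x u v) s = l * (P s + Q s) / 2).
  { intro s. apply is_derive_unique.
    replace (l * (P s + Q s) / 2) with ((l * P s - - (l * Q s)) / 2) by field.
    exact (proj2 (is_derive_null u v s _ _ (du s) (dv s))). }
  intro s.
  assert (DP : Derive (fun x => P x) s = l * tau s * P s) by apply is_derive_unique, dP.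
  assert (DQ : Derive (fun x => Q x) s = - (l * tau s * Q s)) by apply is_derive_unique, dQ.
  assert (exPQ : ex_derive (fun x => P x) s /\ ex_derive (fun x => Q x) s /\ True)
    by (split; [eexists; exact (dP s) | split; [eexists; exact (dQ s) | exact I]]).
  assert (DDt : Derive_n (null_t u v) 2 s = l ^ 2 * tau s * (P s + Q s) / 2).
  { change (Derive (Derive (null_t u v)) s = l ^ 2 * tau s * (P s + Q s) / 2).
    rewrite (Derive_ext _ _ _ Dt). apply is_derive_unique.
    auto_derive; [apply exPQ | rewrite DP, DQ; field]. }
  assert (DDx : Derive_n (null_x u v) 2 s = l ^ 2 * tau s * (P s - Q s) / 2).
  { change (Derive (Derive (null_x u v)) s = l ^ 2 * tau s * (P s - Q s) / 2).
    rewrite (Derive_ext _ _ _ Dx). apply is_derive_unique.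
    auto_derive; [apply exPQ | rewrite DP, DQ; field]. }
  unfold vel, acc; rewrite Dt, Dx, DDt, DDx; split; reflexivity.
Qed.

Lemma realizes_null (tau : R -> R) (l : R) (u v P Q : R -> R) : 0 < l ->
  (forall s, 0 < P s) -> (forall s, P s * Q s = 1) ->
  (forall s, is_derive P s (l * tau s * P s)) ->
  (forall s, is_derive Q s (- (l * tau s * Q s))) ->
  (forall s, is_derive u s (l * P s)) -> (forall s, is_derive v s (- (l * Q s))) ->
  realizes tau l (null_t u v) (null_x u v).
Proof.
  intros Hl HP HPQ dP dQ du dv.
  assert (HQ : forall s, 0 < Q s).
  { intro s. specialize (HP s). specialize (HPQ s). nra. }
  assert (Hnorm : forall s,
    mink (vel (null_t u v) (null_x u v) s) (vel (null_t u v) (null_x u v) s) = l ^ 2).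
  { intro s. destruct (null_curve_derivatives tau l u v P Q dP dQ du dv s) as [-> _].
    unfold mink; simpl. transitivity (l ^ 2 * (P s * Q s)); [field | rewrite HPQ; ring]. }
  split; [| split]; [intro s; rewrite Hnorm; nra | exact Hnorm |].
  intro s. unfold future_unit_normal. rewrite Hnorm, sqrt_pow2 by lra.
  destruct (null_curve_derivatives tau l u v P Q dP dQ du dv s) as [-> ->]; simpl.
  destruct (Rlt_dec 0 (l * (P s + Q s) / 2)) as [_ | Hneg].
  - unfold mink; simpl.
    transitivity (tau s * l ^ 2 * (P s * Q s)); [field; lra | rewrite HPQ; ring].
  - exfalso; apply Hneg. specialize (HP s); specialize (HQ s). nra.
Qed.

Section NullCurve.

Variables (tau : R -> R) (l alpha a b : R).
Hypothesis Htau : Cinf tau.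
Hypothesis Hl : 0 < l.
Hypothesis Halpha : 0 < alpha.

Definition theta (s : R) : R := l * RInt tau 0 s.
Definition null_u (s : R) : R := a + l * alpha * RInt (fun y => exp (theta y)) 0 s.
Definition null_v (s : R) : R := b - l / alpha * RInt (fun y => exp (- theta y)) 0 s.

Lemma Cinf_theta : Cinf theta.
Proof. apply Cinf_mult; [apply Cinf_const | apply Cinf_RInt, Htau]. Qed.

Lemma Cinf_exp_theta : Cinf (fun y => exp (theta y)).
Proof. apply Cinf_comp; [apply Cinf_theta | apply Cinf_exp]. Qed.

Lemma Cinf_exp_neg_theta : Cinf (fun y => exp (- theta y)).
Proof.
  apply Cinf_comp; [| apply Cinf_exp].
  apply (Cinf_ext (fun y => -1 * theta y)); [intro; ring |].
  apply Cinf_mult; [apply Cinf_const | apply Cinf_theta].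
Qed.

Lemma Cinf_null_u : Cinf null_u.
Proof.
  apply Cinf_plus; [apply Cinf_const |].
  apply Cinf_mult; [apply Cinf_const | apply Cinf_RInt, Cinf_exp_theta].
Qed.

Lemma Cinf_null_v : Cinf null_v.
Proof.
  apply (Cinf_ext (fun s => b + - (l / alpha) * RInt (fun y => exp (- theta y)) 0 s));
    [intro; unfold null_v; ring |].
  apply Cinf_plus; [apply Cinf_const |].
  apply Cinf_mult; [apply Cinf_const | apply Cinf_RInt, Cinf_exp_neg_theta].
Qed.

Lemma smooth_null_curve : smooth (null_t null_u null_v) /\ smooth (null_x null_u null_v).
Proof.
  split; apply smooth_Cinf; unfold null_t, null_x.
  - apply (Cinf_ext (fun s => (null_u s + null_v s) * / 2)); [intro; reflexivity |].
    apply Cinf_mult; [apply Cinf_plus; [apply Cinf_null_u | apply Cinf_null_v] | apply Cinf_const].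
  - apply (Cinf_ext (fun s => (null_u s + -1 * null_v s) * / 2)); [intro; field |].
    apply Cinf_mult; [| apply Cinf_const].
    apply Cinf_plus; [apply Cinf_null_u | apply Cinf_mult; [apply Cinf_const | apply Cinf_null_v]].
Qed.

Lemma is_derive_theta s : is_derive theta s (l * tau s).
Proof. apply is_derive_scal, is_derive_RInt_0, Cinf_continuous, Htau. Qed.

Lemma is_derive_null_u s : is_derive null_u s (l * alpha * exp (theta s)).
Proof.
  apply is_derive_affine, (is_derive_RInt_0 (fun y => exp (theta y))).
  apply Cinf_continuous, Cinf_exp_theta.
Qed.

Lemma is_derive_null_v s : is_derive null_v s (- (l / alpha) * exp (- theta s)).
Proof.
  apply (is_derive_ext (fun x => b + - (l / alpha) * RInt (fun y => exp (- theta y)) 0 x));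
    [intro; unfold null_v, Rminus; rewrite Ropp_mult_distr_l; reflexivity |].
  apply is_derive_affine, (is_derive_RInt_0 (fun y => exp (- theta y))).
  apply Cinf_continuous, Cinf_exp_neg_theta.
Qed.

Lemma realizes_null_curve : realizes tau l (null_t null_u null_v) (null_x null_u null_v).
Proof.
  apply (realizes_null tau l null_u null_v (fun s => alpha * exp (theta s))
           (fun s => / alpha * exp (- theta s))); auto.
  - intro s; apply Rmult_lt_0_compat; [exact Halpha | apply exp_pos].
  - intro s. rewrite exp_Ropp. field. split; [apply Rgt_not_eq, exp_pos | lra].
  - intro s. assert (D : Derive (fun x => theta x) s = l * tau s)
      by (apply is_derive_unique, is_derive_theta).
    auto_derive; [exists (l * tau s); apply is_derive_theta | rewrite D; ring].
  - intro s. assert (D : Derive (fun x => theta x) s = l * tau s)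
      by (apply is_derive_unique, is_derive_theta).
    auto_derive; [exists (l * tau s); apply is_derive_theta | rewrite D; field; lra].
  - intro s. replace (l * (alpha * exp (theta s))) with (l * alpha * exp (theta s)) by ring.
    apply is_derive_null_u.
  - intro s. replace (- (l * (/ alpha * exp (- theta s)))) with (- (l / alpha) * exp (- theta s))
      by (field; lra).
    apply is_derive_null_v.
Qed.

Lemma null_u_increasing x y : x < y -> null_u x < null_u y.
Proof.
  intro Hxy. unfold null_u. apply Rplus_lt_compat_l, Rmult_lt_compat_l; [nra |].
  apply RInt_0_increasing; auto; [apply Cinf_continuous, Cinf_exp_theta | intro; apply exp_pos].
Qed.

Lemma null_v_decreasing x y : x < y -> null_v y < null_v x.
Proof.
  intro Hxy. unfold null_v. apply Rplus_lt_compat_l, Ropp_lt_contravar, Rmult_lt_compat_l.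
  - apply Rdiv_lt_0_compat; assumption.
  - apply RInt_0_increasing; auto;
      [apply Cinf_continuous, Cinf_exp_neg_theta | intro; apply exp_pos].
Qed.

Hypothesis Hper : periodic1 tau.

Lemma theta_shift s : theta (s + 1) = theta s + theta 1.
Proof.
  unfold theta. rewrite (RInt_0_shift1 tau 1); [ring | apply Cinf_continuous, Htau |].
  intro y; rewrite Hper; ring.
Qed.

Lemma null_u_shift s : null_u (s + 1) = null_u 1 + exp (theta 1) * (null_u s - a).
Proof.
  unfold null_u at 1 3. rewrite (RInt_0_shift1 _ (exp (theta 1))).
  - unfold null_u; ring.
  - apply Cinf_continuous, Cinf_exp_theta.
  - intro y; rewrite theta_shift, exp_plus; ring.
Qed.

Lemma null_v_shift s : null_v (s + 1) = null_v 1 + exp (- theta 1) * (null_v s - b).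
Proof.
  unfold null_v at 1 3. rewrite (RInt_0_shift1 _ (exp (- theta 1))).
  - unfold null_v; ring.
  - apply Cinf_continuous, Cinf_exp_neg_theta.
  - intro y; rewrite theta_shift, Ropp_plus_distr, exp_plus; ring.
Qed.

End NullCurve.

Lemma kasner_realization tau l : Cinf tau -> periodic1 tau -> 0 < l -> theta tau l 1 <> 0 ->
  exists ct cx : R -> R, kasner_embedding (theta tau l 1) ct cx /\ realizes tau l ct cx.
Proof.
  intros Htau Hper Hl HPsi. set (Psi := theta tau l 1).
  assert (Hexp : exp Psi <> 1) by (intro E; apply HPsi; rewrite <- exp_0 in E; apply exp_inv, E).
  assert (Hexpm : exp (- Psi) <> 1)
    by (intro E; apply HPsi; rewrite <- exp_0 in E; apply exp_inv in E; fold Psi; lra).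
  (* [a] and [b] are the fixed points of the affine maps in [null_u_shift], [null_v_shift]. *)
  set (a := l * RInt (fun y => exp (theta tau l y)) 0 1 / (exp Psi - 1)).
  set (b := l * RInt (fun y => exp (- theta tau l y)) 0 1 / (1 - exp (- Psi))).
  set (u := null_u tau l 1 a). set (v := null_v tau l 1 b).
  assert (Hu : forall s, u (s + 1) = exp Psi * u s).
  { intro s. unfold u; rewrite null_u_shift by assumption.
    unfold null_u at 1; fold Psi; unfold a. field. intro E; apply Hexp; lra. }
  assert (Hv : forall s, v (s + 1) = exp (- Psi) * v s).
  { intro s. unfold v; rewrite null_v_shift by assumption.
    unfold null_v at 1; fold Psi; unfold b. field. intro E; apply Hexpm; lra. }
  assert (Hreal : realizes tau l (null_t u v) (null_x u v))
    by (apply realizes_null_curve; [exact Htau | exact Hl | lra]).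
  destruct (smooth_null_curve tau l 1 a b Htau) as [Ht Hx].
  exists (null_t u v), (null_x u v). split; [| exact Hreal].
  apply kasner_embedding_null; auto.
  - intros x y; apply null_u_increasing; auto; lra.
  - intros x y; apply null_v_decreasing; auto; lra.
  - intro s; apply spacelike_vel_neq0, Hreal.
Qed.

Lemma cylinder_realization tau l : Cinf tau -> periodic1 tau -> 0 < l -> theta tau l 1 = 0 ->
  exists L, 0 < L /\ exists ct cx : R -> R, cylinder_embedding L ct cx /\ realizes tau l ct cx.
Proof.
  intros Htau Hper Hl HPsi.
  set (E := RInt (fun y => exp (theta tau l y)) 0 1).
  set (F := RInt (fun y => exp (- theta tau l y)) 0 1).
  assert (HE : 0 < E).
  { apply RInt_gt_0; [lra | intros; apply exp_pos |].
    intros; apply Cinf_continuous, Cinf_exp_theta, Htau. }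
  assert (HF : 0 < F).
  { apply RInt_gt_0; [lra | intros; apply exp_pos |].
    intros; apply Cinf_continuous, Cinf_exp_neg_theta, Htau. }
  (* [alpha] balances the two null directions so that [t] comes back after one period. *)
  set (alpha := sqrt (F / E)).
  assert (Halpha : 0 < alpha) by (apply sqrt_lt_R0, Rdiv_lt_0_compat; assumption).
  assert (Halpha2 : alpha * alpha = F / E)
    by (apply sqrt_sqrt, Rlt_le, Rdiv_lt_0_compat; assumption).
  set (L := l * alpha * E).
  set (u := null_u tau l alpha 0). set (v := null_v tau l alpha 0).
  assert (Hu : forall s, u (s + 1) = u s + L).
  { intro s. unfold u; rewrite null_u_shift, HPsi, exp_0 by assumption.
    unfold null_u at 1; fold E L; ring. }
  assert (Hv : forall s, v (s + 1) = v s - L).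
  { intro s. unfold v; rewrite null_v_shift, HPsi, Ropp_0, exp_0 by assumption.
    unfold null_v at 1; fold F; unfold L.
    replace F with (alpha * alpha * E) by (rewrite Halpha2; field; lra). field; lra. }
  assert (Hreal : realizes tau l (null_t u v) (null_x u v))
    by (apply realizes_null_curve; assumption).
  destruct (smooth_null_curve tau l alpha 0 0 Htau) as [Ht Hx].
  exists L; split; [apply Rmult_lt_0_compat; [apply Rmult_lt_0_compat |]; assumption |].
  exists (null_t u v), (null_x u v). split; [| exact Hreal].
  apply cylinder_embedding_intro; auto.
  - intro s; unfold null_t; rewrite Hu, Hv; field.
  - intro s; unfold null_x; rewrite Hu, Hv; field.
  - intros x y Hxy; unfold null_x.
    assert (u x < u y) by (apply null_u_increasing; assumption).
    assert (v y < v x) by (apply null_v_decreasing; assumption).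
    lra.
  - intro s; apply spacelike_vel_neq0, Hreal.
Qed.

Theorem proposition5p1 (tau : R -> R) (l : R) :
  smooth tau -> periodic1 tau -> 0 < l ->
  (RInt tau 0 1 <> 0 ->
     exists ct cx : R -> R,
       kasner_embedding (l * RInt tau 0 1) ct cx /\ realizes tau l ct cx) /\
  (RInt tau 0 1 = 0 ->
     exists L : R, 0 < L /\
       exists ct cx : R -> R, cylinder_embedding L ct cx /\ realizes tau l ct cx).
Proof.
  intros Hsmooth Hper Hl. apply smooth_Cinf in Hsmooth.
  split; intro HT.
  - apply kasner_realization; auto.
    unfold theta; intro E; apply Rmult_integral in E; lra.
  - apply cylinder_realization; auto.
    unfold theta; rewrite HT; ring.
Qed.
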